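(* Let $q$ be a prime power with $q=4m+1$ such that $-1\notin D_0^4$ (i.e. $-1$ is not a fourth power in $\mathbb{F}_q$). Let $a,b$ be the two distinct square roots of $-1$ in $\mathbb{F}_q$, and let $$M=\begin{pmatrix}1&-1&a&b\\ -1&1&b&a\\ b&a&1&-1\\ a&b&-1&1\end{pmatrix}.$$ Then the $4\times 4$ block matrix whose $(i,j)$ block is $C_{M_{ij}}$ is the adjacency matrix of a directed strongly regular graph with parameters $(4(4m+1),\ 4m,\ m,\ m-1,\ m)$.
   Context: Fix a primitive element $\gamma$ of $\mathbb{F}_q$; $D_i^e=\gamma^i\langle\gamma^e\rangle$ ($e\mid q-1$) are the cyclotomic classes, here with $e=4$. For $\sigma\in\mathbb{F}_q^*$, $C_\sigma$ is the $q\times q$ $0$-$1$ matrix with rows and columns indexed by $\mathbb{F}_q$ and $(C_\sigma)_{x,y}=1$ iff $x\in\sigma y+D_0^e$. A directed strongly regular graph with parameters $(v,k,t,\lambda,\mu)$ is a digraph (no loops, no multiple arcs) on $v$ vertices whose adjacency matrix $A$ satisfies $A^2=tI+\lambda A+\mu(J-I-A)$ and $AJ=JA=kJ$. *)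

From HB Require Import structures.
From mathcomp Require Import all_boot all_order all_algebra all_field.
Set Implicit Arguments. Unset Strict Implicit. Unset Printing Implicit Defensive.
Import GRing.Theory.
Local Open Scope ring_scope.

(* Cyclotomic class D_i^e = gamma^i <gamma^e> in F_q^*, gamma primitive.
   Since gamma^(q-1) = 1, exponents k < q suffice. *)
Definition cyclo_class (F : finFieldType) (gamma : F) (e i : nat) : {set F} :=
  [set x : F | [exists k : 'I_#|F|, x == gamma ^+ (i + e * k)]].

Definition Cmx (F : finFieldType) (gamma : F) (e : nat) (sigma : F) (x y : F) : bool :=
  (x - sigma * y) \in cyclo_class gamma e 0.

Definition Mmat (F : finFieldType) (a b : F) (i j : 'I_4) : F :=
  nth 0 (nth [::]
    [:: [:: 1; -1; a; b];
        [:: -1; 1; b; a];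
        [:: b; a; 1; -1];
        [:: a; b; -1; 1]] i) j.

Definition block_adj (F : finFieldType) (gamma a b : F) : rel ('I_4 * F)%type :=
  fun u w => Cmx gamma 4 (Mmat a b u.1 w.1) u.2 w.2.

Definition adjmx (V : finType) (e : rel V) (x y : V) : int := (e x y : nat)%:Z.

(* Directed strongly regular graph (v,k,t,lambda,mu): digraph without loops
   whose adjacency matrix A satisfies A^2 = tI + lambda A + mu (J - I - A)
   and AJ = JA = kJ (all written entrywise). *)
Definition is_dsrg (V : finType) (e : rel V) (v k t lam mu : nat) : Prop :=
  [/\ #|V| = v,
      (forall x, ~~ e x x),
      (forall x y, \sum_(z : V) adjmx e x z * adjmx e z y =
          t%:Z * (x == y : nat)%:Z + lam%:Z * adjmx e x y
          + mu%:Z * (1 - (x == y : nat)%:Z - adjmx e x y)),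
      (forall x, \sum_(y : V) adjmx e x y = k%:Z) &
      (forall y, \sum_(x : V) adjmx e x y = k%:Z)].

(* Write D for the class D_0^4. Since q - 1 = 4m, D is the kernel of x |-> x^m, whose image is
   the group of fourth roots of unity. The matrix M has the form M_ij = u_i^-1 u_j with
   u = (1, -1, a, b), and u_l^m = 1, -1, s, -s (s = a^m) are the four fourth roots of unity, so
   for every row i each nonzero e lies in exactly one coset M_il D. Substituting
   z = M_il^-1 e + M_lj y in (A^2)_{(i,x),(j,y)} = sum_l sum_z [x - M_il z in D][z - M_lj y in D]
   then gives A^2 = |D| J - A, which is the required identity with t = mu = m, lambda = m - 1. *)
From mathcomp Require Import all_boot all_order all_algebra all_field.
From mathcomp Require Import ring.
Set Implicit Arguments. Unset Strict Implicit. Unset Printing Implicit Defensive.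
Import GRing.Theory.
Local Open Scope ring_scope.

Lemma sum_mem_card (T : finType) (A : {pred T}) :
  \sum_(x : T) (x \in A : nat)%:Z = #|A|%:Z.
Proof.
rewrite -sum1_card -[RHS]natz natr_sum [RHS]big_mkcond.
by apply: eq_bigr => x _; case: (x \in A).
Qed.

Lemma sum_pair (I J : finType) (V : nmodType) (f : I * J -> V) :
  \sum_(p : I * J) f p = \sum_(i : I) \sum_(j : J) f (i, j).
Proof. by rewrite pair_bigA; apply: eq_bigr => -[]. Qed.

Lemma sum_eq_unity_roots (F : fieldType) (n : nat) (c : 'I_n -> F) (t : F) :
  (0 < n)%N -> injective c -> (forall l, n.-unity_root (c l)) -> n.-unity_root t ->
  \sum_(l < n) (t == c l : nat)%:Z = 1.
Proof.
move=> n_gt0 c_inj c_root t_root.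
have [l0 ->] : exists l0, t = c l0.
  apply/codomP; apply: contraT => t_notin.
  have := @max_unity_roots F n (t :: codom c) n_gt0.
  rewrite /= t_root t_notin codomE map_inj_uniq ?enum_uniq // size_map -cardE card_ord ltnn.
  by apply=> //=; apply/allP => _ /mapP [l _ ->].
rewrite (bigD1 l0) //= eqxx big1 ?addr0 // => l l_neq_l0.
by rewrite (inj_eq c_inj) eq_sym (negbTE l_neq_l0).
Qed.

Lemma expf_card_pred (F : finFieldType) (x : F) : x != 0 -> x ^+ #|F|.-1 = 1.
Proof.
move=> x_neq0; apply: (mulfI x_neq0).
by rewrite -exprS prednK ?expf_card ?mulr1 // (ltnW (card_finNzRing_gt1 F)).
Qed.

Lemma cyclo_class0E (F : finFieldType) (e m : nat) (gamma : F) :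
  #|F| = (e * m).+1 -> (#|F|.-1).-primitive_root gamma ->
  cyclo_class gamma e 0 = [set x : F | x ^+ m == 1].
Proof.
move=> cardF; rewrite cardF /= => gammaP.
have := prim_order_gt0 gammaP; rewrite muln_gt0 => /andP[e_gt0 m_gt0].
apply/setP => x; rewrite !inE; apply/existsP/eqP => [[k /eqP ->]|xm].
  by rewrite add0n -exprM mulnAC exprM (prim_expr_order gammaP) expr1n.
have : x ^+ (e * m) = 1 by rewrite mulnC exprM xm expr1n.
case/(prim_rootP gammaP) => i xi.
have : (e * m %| i * m)%N by rewrite (prim_order_dvd gammaP) exprM -xi xm.
rewrite dvdn_pmul2r // => /dvdnP [k ik].
have k_lt_m : (k < m)%N by rewrite -(ltn_pmul2l e_gt0) mulnC -ik.
have k_lt : (k < #|F|)%N by rewrite cardF ltnS (leq_trans (ltnW k_lt_m)) // leq_pmull.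
by exists (Ordinal k_lt); rewrite /= xi ik mulnC add0n.
Qed.

Section MultiplicativeMatrix.

Variables (F : finFieldType) (n : nat) (M : 'I_n -> 'I_n -> F).

Hypothesis M_mul : forall i l j, M i l * M l j = M i j.
Hypothesis M_diag : forall i, M i i = 1.

Lemma M_neq0 i j : M i j != 0.
Proof.
by apply/eqP => Mij0; have /eqP := M_mul i j i; rewrite Mij0 mul0r M_diag eq_sym oner_eq0.
Qed.

Lemma M_invl i l j : (M i l)^-1 * M i j = M l j.
Proof. by rewrite -(M_mul i l j) mulKf ?M_neq0. Qed.

Section BlockDigraph.

Variable D : {set F}.

Hypothesis row_partition :
  forall i e, \sum_(l < n) ((M i l)^-1 * e \in D : nat)%:Z = (e != 0 : nat)%:Z.

Definition block_rel : rel ('I_n * F) := fun u w => u.2 - M u.1 w.1 * w.2 \in D.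

Lemma notin_D0 (i : 'I_n) : 0 \notin D.
Proof.
have := row_partition i 0; rewrite eqxx /=.
under eq_bigr do rewrite mulr0.
rewrite sumr_const card_ord; case: (0 \in D) => //=.
by rewrite natz => -[n0]; move: i; rewrite n0 => -[].
Qed.

Lemma sum_mem_subl x c :
  c != 0 -> \sum_(z : F) (x - c * z \in D : nat)%:Z = #|D|%:Z.
Proof.
move=> c_neq0; rewrite -sum_mem_card [RHS](reindex_inj (inv_inj (subKr x))).
by rewrite [RHS](reindex_inj (mulfI c_neq0)).
Qed.

Lemma sum_mem_subr t : \sum_(z : F) (z - t \in D : nat)%:Z = #|D|%:Z.
Proof.
rewrite -sum_mem_card (reindex_inj (addIr t)) /=.
by apply: eq_bigr => z _; rewrite addrK.
Qed.

Lemma card_D_mul (i : 'I_n) : (n * #|D|)%N = #|F|.-1.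
Proof.
apply/eqP; rewrite -eqz_nat -(cardC1 (0 : F)); apply/eqP.
transitivity (\sum_(e : F) \sum_(l < n) ((M i l)^-1 * e \in D : nat)%:Z).
  rewrite exchange_big /= (eq_bigr (fun=> #|D|%:Z)) => [|l _].
    by rewrite sumr_const card_ord PoszM -mulr_natl natz.
  have Mil_neq0 := M_neq0 i l.
  rewrite -sum_mem_card (reindex_inj (mulfI Mil_neq0)) /=.
  by under eq_bigr do rewrite mulKf //.
rewrite -sum_mem_card; exact: eq_bigr.
Qed.

Lemma block_rel_irrefl u : ~~ block_rel u u.
Proof. by case: u => i x; rewrite /block_rel /= M_diag mul1r subrr notin_D0. Qed.

Lemma block_rel_sqr u w :
  \sum_v adjmx block_rel u v * adjmx block_rel v w = #|D|%:Z - adjmx block_rel u w.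
Proof.
case: u w => [i x] [j y]; rewrite sum_pair /adjmx /block_rel /=.
set r := x - M i j * y.
transitivity (\sum_(l < n) \sum_(e : F)
    (r - e \in D : nat)%:Z * ((M i l)^-1 * e \in D : nat)%:Z).
  apply: eq_bigr => l _.
  (* substitute z = (M i l)^-1 * e + M l j * y *)
  rewrite (reindex_inj (addIr (M l j * y))) /=.
  rewrite (reindex_inj (mulfI (invr_neq0 (M_neq0 i l)))) /=.
  apply: eq_bigr => e _; rewrite addrK.
  suff -> : x - M i l * ((M i l)^-1 * e + M l j * y) = r - e by [].
  by rewrite mulrDr mulVKf ?M_neq0 // mulrA M_mul /r; ring.
rewrite exchange_big /=.
under eq_bigr do rewrite -mulr_sumr row_partition.
rewrite -(sum_mem_subl r (oner_neq0 F)) (bigD1 0) //= [in RHS](bigD1 0) //=.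
rewrite eqxx mulr0 add0r mul1r subr0 addrAC subrr add0r.
by apply: eq_bigr => e ->; rewrite mulr1 mul1r.
Qed.

Lemma block_rel_outdeg u : \sum_w adjmx block_rel u w = (n * #|D|)%N%:Z.
Proof.
case: u => i x; rewrite sum_pair (eq_bigr (fun=> #|D|%:Z)) => [|l _].
  by rewrite sumr_const card_ord PoszM -mulr_natl natz.
exact: (sum_mem_subl x (M_neq0 i l)).
Qed.

Lemma block_rel_indeg w : \sum_u adjmx block_rel u w = (n * #|D|)%N%:Z.
Proof.
case: w => j y; rewrite sum_pair (eq_bigr (fun=> #|D|%:Z)) => [|l _].
  by rewrite sumr_const card_ord PoszM -mulr_natl natz.
exact: (sum_mem_subr (M l j * y)).
Qed.

Theorem block_rel_dsrg :
  is_dsrg block_rel (n * #|F|) (n * #|D|) #|D| (#|D| - 1) #|D|.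
Proof.
split; [by rewrite card_prod card_ord | exact: block_rel_irrefl | |
        exact: block_rel_outdeg | exact: block_rel_indeg].
move=> u w; rewrite block_rel_sqr /adjmx.
have [<-|_] := eqVneq u w; first by rewrite (negbTE (block_rel_irrefl u)) /=; ring.
case uw: (block_rel u w) => /=; last by ring.
have D_gt0 : (0 < #|D|)%N by apply/card_gt0P; exists (u.2 - M u.1 w.1 * w.2).
by rewrite -subzn //; ring.
Qed.

End BlockDigraph.

Section PowerKernel.

Variable m : nat.

Hypothesis card_F : #|F| = (n * m).+1.
Hypothesis M_pow_neq1 : forall i j, i != j -> M i j ^+ m != 1.

Lemma pow_kernel_row_partition i e :
  \sum_(l < n) ((M i l)^-1 * e \in [set x : F | x ^+ m == 1] : nat)%:Z
    = (e != 0 : nat)%:Z.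
Proof.
have /andP[n_gt0 m_gt0] : (0 < n)%N && (0 < m)%N.
  by rewrite -muln_gt0 -ltnS -card_F card_finNzRing_gt1.
have card_pred : #|F|.-1 = (n * m)%N by rewrite card_F.
have [->|e_neq0] := eqVneq e 0.
  by rewrite big1 // => l _; rewrite mulr0 inE expr0n gtn_eqF // eq_sym oner_eq0.
rewrite (eq_bigr (fun l => (e ^+ m == M i l ^+ m : nat)%:Z)) => [|l _]; last first.
  have Mm_neq0 : M i l ^+ m != 0 by rewrite expf_neq0 ?M_neq0.
  by rewrite inE exprMn exprVn -(inj_eq (mulfI Mm_neq0)) mulVKf // mulr1.
apply: sum_eq_unity_roots => // [l l' eq_pow | l | ]; rewrite ?unity_rootE.
- apply: (contraTeq (@M_pow_neq1 l l')).
  by rewrite -(M_invl i) exprMn exprVn eq_pow mulVf // expf_neq0 ?M_neq0.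
- by rewrite -exprM mulnC -card_pred expf_card_pred ?M_neq0.
- by rewrite -exprM mulnC -card_pred expf_card_pred.
Qed.

End PowerKernel.

End MultiplicativeMatrix.

Section FourBlocks.

Variables (F : finFieldType) (a : F).

Lemma Mmat_diag i : Mmat a (- a) i i = 1.
Proof. by case: i => [[|[|[|[|i]]]] Hi]. Qed.

Lemma Mmat_mul (a2 : a ^+ 2 = -1) i l j :
  Mmat a (- a) i l * Mmat a (- a) l j = Mmat a (- a) i j.
Proof.
move: a2; rewrite expr2 => a2.
by case: i => [[|[|[|[|i]]]] Hi]; case: l => [[|[|[|[|l]]]] Hl];
   case: j => [[|[|[|[|j]]]] Hj] //=; rewrite /Mmat /=;
   rewrite ?mulNr ?mulrN ?opprK ?mul1r ?mulr1 ?a2 ?opprK.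
Qed.

Lemma Mmat_pow_neq1 (m : nat) :
  (-1) ^+ m != 1 :> F -> a ^+ m != 1 -> (- a) ^+ m != 1 ->
  forall i j, i != j -> Mmat a (- a) i j ^+ m != 1.
Proof.
move=> m1_pow a_pow Na_pow i j.
by case: i j => [[|[|[|[|i]]]] Hi] [[|[|[|[|j]]]] Hj] //= _; rewrite /Mmat.
Qed.

End FourBlocks.

Lemma sqrtN1_pow_neq1 (F : fieldType) (m : nat) (x : F) :
  (-1) ^+ m != 1 :> F -> x ^+ 2 = -1 -> x ^+ m != 1.
Proof.
move=> m1_pow x2; apply: contra m1_pow => /eqP xm.
by rewrite -x2 -exprM mulnC exprM xm expr1n.
Qed.

Theorem mainTheorem10 (F : finFieldType) (m : nat) (gamma a b : F) :
  #|F| = (4 * m + 1)%N ->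
  (#|F|.-1).-primitive_root gamma ->
  (-1 : F) \notin cyclo_class gamma 4 0 ->
  a ^+ 2 = -1 -> b ^+ 2 = -1 -> a != b ->
  is_dsrg (block_adj gamma a b) (4 * (4 * m + 1)) (4 * m) m (m - 1) m.
Proof.
move=> cardF gammaP m1_notin_D a2 b2 a_neq_b.
have -> : b = - a.
  by apply/eqP; have := eqf_sqr b a; rewrite a2 b2 eqxx eq_sym (negbTE a_neq_b).
have cardF' : #|F| = (4 * m).+1 by rewrite cardF addn1.
have D_E := cyclo_class0E cardF' gammaP.
have m1_pow : (-1) ^+ m != 1 :> F by move: m1_notin_D; rewrite D_E inE.
have a_pow := sqrtN1_pow_neq1 m1_pow a2.
have Na_pow := sqrtN1_pow_neq1 m1_pow (etrans (sqrrN a) a2).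
have row := pow_kernel_row_partition (Mmat_mul a2) (@Mmat_diag F a) cardF'
  (Mmat_pow_neq1 m1_pow a_pow Na_pow).
have /eqP := card_D_mul (Mmat_mul a2) (@Mmat_diag F a) row 0.
rewrite cardF' eqn_pmul2l // => /eqP cardD.
have := block_rel_dsrg (Mmat_mul a2) (@Mmat_diag F a) row.
by rewrite cardD cardF /block_adj /Cmx D_E.
Qed.
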